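(* Let $1\le N_a<N_b$, $\mathcal N=N_a+N_b$, real $\kappa_1<\dots<\kappa_{\mathcal N}$ with indices taken modulo $\mathcal N$. For $q=(q_1,q_2)\in\mathbb R^2$ define $q_{mn}=q_2-(\kappa_m+\kappa_n)q_1+\kappa_m\kappa_n$ and $\widetilde q_{mn}=(\kappa_m-\kappa_n)q_{mn}$, and let $\theta$ be the Heaviside step function. Then for every $m$ the characteristic function $\epsilon_m(q)=\prod_{k=m}^{m+N_b}\theta(\widetilde q_{k+N_a,k})$ coincides with $$\widetilde\epsilon_m(q)=\prod_{k=m}^{m+N_b}\theta(\widetilde q_{k+N_a,k})\prod_{l=m}^{m+N_b-1}\theta(\widetilde q_{l+N_a,l+1}).$$
   Context: Indices of $\kappa$ are read modulo $\mathcal N$, i.e. $\kappa_{l+\mathcal N}=\kappa_l$. *)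

From mathcomp Require Import all_boot all_order all_algebra.
From mathcomp Require Import reals.
Set Implicit Arguments. Unset Strict Implicit. Unset Printing Implicit Defensive.
Import Order.TTheory GRing.Theory Num.Theory.
Local Open Scope ring_scope.

Definition heaviside {R : realType} (x : R) : R := if 0 <= x then 1 else 0.

Section Defs.
Variables (R : realType) (kappa : nat -> R).

Definition qmn (q : R * R) (m n : nat) : R :=
  q.2 - (kappa m + kappa n) * q.1 + kappa m * kappa n.

Definition qtil (q : R * R) (m n : nat) : R := (kappa m - kappa n) * qmn q m n.

Definition eps (Na Nb : nat) (m : nat) (q : R * R) : R :=
  \prod_(m <= k < m + Nb + 1) heaviside (qtil q (k + Na) k).

Definition epst (Na Nb : nat) (m : nat) (q : R * R) : R :=
  (\prod_(m <= k < m + Nb + 1) heaviside (qtil q (k + Na) k)) *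
  (\prod_(m <= l < m + Nb) heaviside (qtil q (l + Na) l.+1)).
End Defs.

(** For four points [a, b, c, d] in cyclic order, the chord quantity
  [(c - b) q_cb] times a positive constant equals a positive combination of
  the crossing chord quantities [(c - a) q_ca] and [(d - b) q_db] plus a
  positive constant.  With [a, b, c, d] = [kappa_l, kappa_(l+1), kappa_(l+Na),
  kappa_(l+1+Na)], cyclically ordered by periodicity and monotonicity of
  [kappa], every extra factor of [epst] is thus implied by two factors of
  [eps]; for [Na = 1] the extra factors are [theta 0 = 1]. *)

From mathcomp Require Import all_boot all_order all_algebra.
From mathcomp Require Import reals.
From mathcomp Require Import ring lra zify.

Set Implicit Arguments.
Unset Strict Implicit.
Unset Printing Implicit Defensive.

Import Order.TTheory GRing.Theory Num.Theory.
Local Open Scope ring_scope.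

Definition increasing4 {R : realDomainType} (a b c d : R) :=
  [&& a < b, b < c & c < d].

Definition cyclic_order4 {R : realDomainType} (a b c d : R) :=
  [|| increasing4 a b c d, increasing4 b c d a,
      increasing4 c d a b | increasing4 d a b c].

Ltac sign_of_product :=
  lazymatch goal with
  | |- is_true (0 < _ * ?x) =>
      let hx := fresh "hx" in
      first [ assert (hx : 0 < x) by lra; rewrite (pmulr_lgt0 _ hx)
            | assert (hx : x < 0) by lra; rewrite (nmulr_lgt0 _ hx) ];
      clear hx; sign_of_product
  | |- is_true (_ * ?x < 0) =>
      let hx := fresh "hx" in
      first [ assert (hx : 0 < x) by lra; rewrite (pmulr_llt0 _ hx)
            | assert (hx : x < 0) by lra; rewrite (nmulr_llt0 _ hx) ];
      clear hx; sign_of_product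
  | _ => lra
  end.

Lemma chord_ge0_cyclic (R : realFieldType) (a b c d x y : R) :
  cyclic_order4 a b c d ->
  0 <= (c - a) * (y - (c + a) * x + c * a) ->
  0 <= (d - b) * (y - (d + b) * x + d * b) ->
  0 <= (c - b) * (y - (c + b) * x + c * b).
Proof.
move=> abcd hac hbd.
set K := ((b - a) + (d - c)) * (c - a) * (d - b).
set A := (c - b) * (d - c) * (d - b).
set B := (c - b) * (b - a) * (c - a).
set G := (c - b) * (c - b) * (b - a) * (d - c) * (c - a) * (d - b).
have [K_gt0 A_gt0 B_gt0 G_gt0] : [/\ 0 < K, 0 < A, 0 < B & 0 < G].
  by rewrite /K /A /B /G; case/or4P: abcd => /and3P[? ? ?]; split;
    sign_of_product.
rewrite -(pmulr_rge0 _ K_gt0).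
have -> : K * ((c - b) * (y - (c + b) * x + c * b)) =
          A * ((c - a) * (y - (c + a) * x + c * a)) +
          B * ((d - b) * (y - (d + b) * x + d * b)) + G.
  by rewrite /K /A /B /G; ring.
by apply/addr_ge0/ltW/G_gt0; apply/addr_ge0; apply/mulr_ge0 => //; exact/ltW.
Qed.

Section PeriodicIncreasing.
Variables (R : realDomainType) (N : nat) (kappa : nat -> R).
Hypothesis N_gt0 : (0 < N)%N.
Hypothesis kappa_periodic : forall l, kappa (l + N)%N = kappa l.
Hypothesis kappa_increasing :
  forall i j, (1 <= i)%N -> (i < j)%N -> (j <= N)%N -> kappa i < kappa j.

Lemma kappa_modn j : kappa j = kappa (j %% N)%N.
Proof.
rewrite {1}(divn_eq j N); elim: (j %/ N)%N => [|t IH]; first by rewrite mul0n.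
by rewrite mulSnr -addnAC kappa_periodic.
Qed.

Lemma kappa_shift_representative l :
  exists2 r, (1 <= r <= N)%N & forall s, kappa (l + s)%N = kappa (r + s)%N.
Proof.
pose r := if (l %% N == 0)%N then N else (l %% N)%N.
have r_mod : (r %% N = l %% N)%N.
  by rewrite /r; case: eqP => [->|_]; rewrite ?modnn ?modn_mod.
exists r; first by have := ltn_pmod l N_gt0; rewrite /r; case: eqP; lia.
move=> s; rewrite kappa_modn [RHS]kappa_modn; congr kappa.
by rewrite -[RHS]modnDml r_mod modnDml.
Qed.

Lemma kappa_wrap j : (N < j)%N -> kappa j = kappa (j - N)%N.
Proof. by move=> ?; rewrite -[RHS]kappa_periodic subnK // ltnW. Qed.

Lemma kappa_cyclic_order4 l s1 s2 s3 :
  (0 < s1)%N -> (s1 < s2)%N -> (s2 < s3)%N -> (s3 < N)%N ->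
  cyclic_order4 (kappa l)
    (kappa (l + s1)%N) (kappa (l + s2)%N) (kappa (l + s3)%N).
Proof.
move=> s1_gt0 s12 s23 s3N.
have [r /andP[r_ge1 r_leN] shift] := kappa_shift_representative l.
rewrite -{1}[l]addn0 !shift addn0.
case: (leqP (r + s3) N) => [h3|h3]; last rewrite (kappa_wrap h3);
  case: (leqP (r + s2) N) => [h2|h2]; try rewrite (kappa_wrap h2);
  case: (leqP (r + s1) N) => [h1|h1]; try rewrite (kappa_wrap h1); try lia.
- by apply/or4P/Or41/and3P; split; apply: kappa_increasing; lia.
- by apply/or4P/Or44/and3P; split; apply: kappa_increasing; lia.
- by apply/or4P/Or43/and3P; split; apply: kappa_increasing; lia.
- by apply/or4P/Or42/and3P; split; apply: kappa_increasing; lia.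
Qed.

End PeriodicIncreasing.

Section HeavisideProducts.
Variables (R : realType) (I : Type) (F : I -> R).

Lemma prod_heaviside_eq1 (s : seq I) :
  all (fun i => 0 <= F i) s -> \prod_(i <- s) heaviside (F i) = 1.
Proof.
elim: s => [|i s IH]; rewrite ?big_nil ?big_cons //= => /andP[Fi_ge0 /IH ->].
by rewrite /heaviside Fi_ge0 mulr1.
Qed.

Lemma prod_heaviside_eq0 (s : seq I) :
  ~~ all (fun i => 0 <= F i) s -> \prod_(i <- s) heaviside (F i) = 0.
Proof.
rewrite -has_predC => neg; apply/eqP; rewrite prodf_seq_eq0.
by apply: sub_has neg => i /= /negbTE; rewrite /heaviside => ->.
Qed.

End HeavisideProducts.

Theorem lemma5p3 (R : realType) (Na Nb : nat) (kappa : nat -> R)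
  (hNa : (1 <= Na)%N) (hNab : (Na < Nb)%N)
  (hper : forall l : nat, kappa (l + (Na + Nb))%N = kappa l)
  (hinc : forall i j : nat, (1 <= i)%N -> (i < j)%N -> (j <= Na + Nb)%N ->
            kappa i < kappa j) :
  forall (m : nat) (q : R * R), eps kappa Na Nb m q = epst kappa Na Nb m q.
Proof.
move=> m q; rewrite /eps /epst.
have [nneg|] := boolP (all (fun k => 0 <= qtil kappa q (k + Na) k)
                          (index_iota m (m + Nb + 1))); last first.
  by move/prod_heaviside_eq0 ->; rewrite mul0r.
rewrite (prod_heaviside_eq1 nneg) mul1r; symmetry.
apply/prod_heaviside_eq1/allP => l; rewrite mem_index_iota => /andP[ml lmNb].
have [->|Na_gt1] := eqVneq Na 1%N; first by rewrite addn1 /qtil subrr mul0r.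
have cyc : cyclic_order4 (kappa l) (kappa l.+1)
                          (kappa (l + Na)%N) (kappa (l.+1 + Na)%N).
  rewrite -[l.+1]addn1 -addnA.
  by apply: (kappa_cyclic_order4 _ hper hinc); lia.
apply: (chord_ge0_cyclic cyc).
- by apply: (allP nneg l); rewrite mem_index_iota; lia.
- by apply: (allP nneg l.+1); rewrite mem_index_iota; lia.
Qed.
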